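(* Let $T=\{t_1,\ldots,t_N\}$ be documents, each containing at most $L$ distinct words from a dictionary $\{w_1,\ldots,w_D\}$ ($D\ge2$). For a word $w$ let $\#(w)$ be the number of documents containing $w$. Fix $\epsilon\in(0,1]$ and $p=2\log D$. Consider the mapper that, for every document $t$ and every unordered pair of distinct words $(w_1,w_2)$ in $t$, independently emits $((w_1,w_2)\to1)$ with probability $\min\!\left(1,\frac{p}{\epsilon}\frac{2}{\#(w_1)+\#(w_2)}\right)$ (DiceSampleEmit). Then the expected total number of emitted pairs (shuffle size) is $O(DL\log(D)/\epsilon)$, independently of $N$.
   Context: This sampling scheme is used to estimate the Dice similarity $\frac{2\#(x,y)}{\#(x)+\#(y)}$, where $\#(x,y)$ is the number of documents containing both $x$ and $y$. $\log$ denotes the natural logarithm. *)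

From HB Require Import structures.
From mathcomp Require Import all_boot all_order all_algebra.
From mathcomp Require Import reals exp.
Set Implicit Arguments. Unset Strict Implicit. Unset Printing Implicit Defensive.
Import Order.TTheory GRing.Theory Num.Theory.
Local Open Scope ring_scope.

(* Dictionary = 'I_D (words w_1..w_D); corpus = N documents T : 'I_N -> {set 'I_D},
   each document being its set of distinct words. *)

Definition doc_count (D N : nat) (T : 'I_N -> {set 'I_D}) (w : 'I_D) : nat :=
  #|[set i | w \in T i]|.

Definition dice_emit_prob (R : realType) (D N : nat) (T : 'I_N -> {set 'I_D})
    (eps : R) (w1 w2 : 'I_D) : R :=
  Num.min 1 ((2 * ln (D%:R)) / eps *
             (2 / (doc_count T w1 + doc_count T w2)%:R)).

(* Expected shuffle size: expected number of emitted pairs = (by linearity of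
   expectation) the sum, over documents t and unordered pairs of distinct words
   {w1,w2} of t (enumerated as w1 < w2), of the emission probabilities. *)
Definition dice_expected_shuffle (R : realType) (D N : nat) (T : 'I_N -> {set 'I_D})
    (eps : R) : R :=
  \sum_(i < N) \sum_(w1 in T i) \sum_(w2 in T i | (w1 < w2)%N)
     dice_emit_prob T eps w1 w2.

From HB Require Import structures.
From mathcomp Require Import all_boot all_order all_algebra.
From mathcomp Require Import reals exp.
From mathcomp Require Import ring.
Set Implicit Arguments. Unset Strict Implicit. Unset Printing Implicit Defensive.
Import Order.TTheory GRing.Theory Num.Theory.
Local Open Scope ring_scope.

(* Bound the emission probability of a pair (w1, w2) by c / #(w1), with
   c = 4 log D / eps, and charge it to w1.  Each document contributes at most
   L such charges per word it contains, and a word w is contained in exactly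
   #(w) documents, so the total charge of w is at most (c / #(w)) * #(w) * L
   = c L.  Summing over the D words gives 4 D L log D / eps, whatever N is. *)

Lemma doc_count_gt0 (D N : nat) (T : 'I_N -> {set 'I_D}) i w :
  w \in T i -> (0 < doc_count T w)%N.
Proof. by move=> wTi; apply/card_gt0P; exists i; rewrite inE. Qed.

Lemma sum_docs_words (V : nmodType) (D N : nat) (T : 'I_N -> {set 'I_D})
    (F : 'I_D -> V) :
  \sum_(i < N) \sum_(w in T i) F w = \sum_(w < D) F w *+ doc_count T w.
Proof.
rewrite (exchange_big_dep xpredT) //=; apply: eq_bigr => w _.
rewrite sumr_const; congr (_ *+ _).
by apply: eq_card => i; rewrite inE.
Qed.

Lemma divr_mulrn_le (R : numFieldType) (c : R) (n : nat) :
  0 <= c -> (c / n%:R) *+ n <= c.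
Proof.
move=> c_ge0; have [->|n_gt0] := posnP n; first by rewrite mulr0n.
by rewrite -mulr_natr divfK // pnatr_eq0 -lt0n.
Qed.

Lemma charge_mulrn_le (R : numFieldType) (c : R) (n L : nat) :
  0 <= c -> (c / n%:R *+ L) *+ n <= c *+ L.
Proof.
move=> c_ge0; rewrite -mulrnA mulnC mulrnA.
by apply: ler_wMn2r; apply: divr_mulrn_le.
Qed.

Lemma scaled_ln_nat_ge0 (R : realType) (k eps : R) (D : nat) :
  0 <= k -> (1 <= D)%N -> 0 < eps -> 0 <= k * ln D%:R / eps.
Proof.
move=> k_ge0 D_ge1 eps_gt0; apply: divr_ge0; last exact: ltW.
by apply: mulr_ge0 => //; apply: ln_ge0; rewrite (ler_nat R 1 D).
Qed.

Lemma dice_emit_prob_le (R : realType) (D N : nat) (T : 'I_N -> {set 'I_D})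
    (eps : R) i w1 w2 :
  (1 <= D)%N -> 0 < eps -> w1 \in T i ->
  dice_emit_prob T eps w1 w2 <= 4 * ln D%:R / eps / (doc_count T w1)%:R.
Proof.
move=> D_ge1 eps_gt0 w1Ti.
have c_ge0 : 0 <= 2 * ln D%:R / eps by exact: scaled_ln_nat_ge0.
have cw1_gt0 := doc_count_gt0 w1Ti.
have -> : 4 * ln D%:R / eps / (doc_count T w1)%:R
          = 2 * ln D%:R / eps * (2 / (doc_count T w1)%:R).
  by ring.
rewrite ge_min; apply/orP; right; apply: ler_wpM2l => //.
apply: ler_wpM2l => //.
by rewrite lef_pV2 ?posrE ?ltr0n ?addn_gt0 ?cw1_gt0 // ler_nat leq_addr.
Qed.

Lemma dice_expected_shuffle_le_charges (R : realType) (D L N : nat)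
    (T : 'I_N -> {set 'I_D}) (eps : R) :
  (1 <= D)%N -> (forall i, (#|T i| <= L)%N) -> 0 < eps ->
  dice_expected_shuffle T eps
    <= \sum_(i < N) \sum_(w1 in T i) (4 * ln D%:R / eps / (doc_count T w1)%:R) *+ L.
Proof.
move=> D_ge1 TL eps_gt0; apply: ler_sum => i _; apply: ler_sum => w1 w1Ti.
set c := _ / _ / _.
have c_ge0 : 0 <= c by rewrite divr_ge0 // scaled_ln_nat_ge0.
apply: (@le_trans _ _ (\sum_(w2 in T i) c)); last first.
  by rewrite sumr_const ler_wpMn2l.
rewrite big_mkcondr /=; apply: ler_sum => w2 _.
by case: ifP => _ //; apply: dice_emit_prob_le w1Ti.
Qed.

Theorem theorem9 (R : realType) :
  exists C : R, 0 < C /\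
    forall (D L N : nat) (T : 'I_N -> {set 'I_D}) (eps : R),
      (2 <= D)%N ->
      (forall i, (#|T i| <= L)%N) ->
      0 < eps -> eps <= 1 ->
      dice_expected_shuffle T eps <= C * D%:R * L%:R * ln (D%:R) / eps.
Proof.
exists 4; split => // D L N T eps D_ge2 TL eps_gt0 _.
have D_ge1 : (1 <= D)%N by apply: ltnW.
have c_ge0 : 0 <= 4 * ln D%:R / eps by exact: scaled_ln_nat_ge0.
apply: le_trans (dice_expected_shuffle_le_charges D_ge1 TL eps_gt0) _.
rewrite sum_docs_words.
apply: le_trans (ler_sum _ (fun w _ => charge_mulrn_le _ L c_ge0)) _.
by rewrite sumr_const card_ord le_eqVlt; apply/orP; left; apply/eqP; ring.
Qed.
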